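(* Let $\mathcal{H}$ be a $d$-dimensional Hilbert space with fixed orthonormal basis $\{|i\rangle\}_{i=0}^{d-1}$. The logarithmic coherence number $\mathcal{L}_C$ on density operators on $\mathcal{H}$ satisfies: (C1) $\mathcal{L}_C(\rho)\ge 0$ for all states $\rho$, and $\mathcal{L}_C(\rho)=0$ if and only if $\rho$ is incoherent; (C2) $\mathcal{L}_C(\Lambda(\rho))\le\mathcal{L}_C(\rho)$ for every incoherent operation $\Lambda$ and every state $\rho$; (C3) for every incoherent operation with incoherent Kraus operators $\{K_n\}$ and every state $\rho$, $\sum_n q_n\mathcal{L}_C(\rho_n)\le\mathcal{L}_C(\rho)$, where $q_n=\mathrm{Tr}(K_n\rho K_n^\dagger)$ and $\rho_n=K_n\rho K_n^\dagger/q_n$ (sum over $n$ with $q_n>0$); (C4) $\mathcal{L}_C\big(\sum_i p_i\rho_i\big)\le\sum_i p_i\mathcal{L}_C(\rho_i)$ for every ensemble $\{p_i,\rho_i\}$ of states. In particular, $\mathcal{L}_C$ is a coherence measure.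
   Context: A state is incoherent if it is diagonal in the fixed basis $\{|i\rangle\}$; $\mathcal{I}$ denotes the set of incoherent states. An incoherent operation is a completely positive trace-preserving map $\Lambda(\rho)=\sum_n K_n\rho K_n^\dagger$ with $\sum_n K_n^\dagger K_n=I$ and each Kraus operator satisfying $K_n\mathcal{I}K_n^\dagger\subseteq\mathcal{I}$ (up to normalization, i.e. $K_n\delta K_n^\dagger$ is diagonal for every diagonal $\delta$). The coherence rank $R_C(|\psi\rangle)$ of a pure state $|\psi\rangle=\sum_j\lambda_j|j\rangle$ is the number of nonzero coefficients $\lambda_j$. The logarithmic coherence rank is $\mathcal{L}_C(|\psi\rangle)=\log_2 R_C(|\psi\rangle)$, and the logarithmic coherence number of a state $\rho$ is $\mathcal{L}_C(\rho)=\min\sum_i p_i\mathcal{L}_C(|\psi_i\rangle)$, the minimum over all pure-state decompositions $\rho=\sum_i p_i|\psi_i\rangle\langle\psi_i|$. *)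

From HB Require Import structures.
From mathcomp Require Import all_boot all_order all_algebra.
From mathcomp Require Import boolp classical_sets reals exp.
From mathcomp Require Import complex.
Set Implicit Arguments. Unset Strict Implicit. Unset Printing Implicit Defensive.
Import Order.TTheory GRing.Theory Num.Theory.
Local Open Scope ring_scope.
Local Open Scope complex_scope.

Section Coherence.
Variables (R : realType) (d : nat).
Local Notation C := R[i].

Definition adjmx m n (A : 'M[C]_(m, n)) : 'M[C]_(n, m) := (map_mx conjc A)^T.

Definition is_state (rho : 'M[C]_d) : Prop :=
  (forall v : 'cV[C]_d, 0 <= (adjmx v *m rho *m v) 0 0) /\ \tr rho = 1.

Definition incoherent (rho : 'M[C]_d) : Prop := is_diag_mx rho.

Definition unit_vec (psi : 'cV[C]_d) : Prop := (adjmx psi *m psi) 0 0 = 1.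

Definition coh_rank (psi : 'cV[C]_d) : nat := #|[set j : 'I_d | psi j 0 != 0]|.
Definition log2 (x : R) : R := ln x / ln 2.
Definition log_coh_rank (psi : 'cV[C]_d) : R := log2 (coh_rank psi)%:R.

Definition pure_decomp (rho : 'M[C]_d) m (p : 'I_m -> R) (psi : 'I_m -> 'cV[C]_d) :
  Prop :=
  [/\ forall i, 0 <= p i, \sum_(i < m) p i = 1, forall i, unit_vec (psi i) &
      rho = \sum_(i < m) (p i)%:C *: (psi i *m adjmx (psi i))].

(* logarithmic coherence number: min (= inf, the minimum is attained) over
   all pure-state decompositions *)
Local Open Scope classical_set_scope.
Definition log_coh_number (rho : 'M[C]_d) : R :=
  inf [set x : R | exists m (p : 'I_m -> R) (psi : 'I_m -> 'cV[C]_d),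
         pure_decomp rho p psi /\ x = \sum_(i < m) p i * log_coh_rank (psi i)].

Definition incoherent_kraus (K : 'M[C]_d) : Prop :=
  forall delta : 'M[C]_d, is_diag_mx delta -> is_diag_mx (K *m delta *m adjmx K).

Definition incoherent_op N (K : 'I_N -> 'M[C]_d) : Prop :=
  \sum_(n < N) adjmx (K n) *m K n = 1%:M /\ forall n, incoherent_kraus (K n).

Definition apply_kraus N (K : 'I_N -> 'M[C]_d) (rho : 'M[C]_d) : 'M[C]_d :=
  \sum_(n < N) K n *m rho *m adjmx (K n).

(* outcome probability q_n = Tr(K_n rho K_n^dagger) (a nonnegative real for a
   state rho; we take its real part to view it in R) *)
Definition kraus_prob (K : 'M[C]_d) (rho : 'M[C]_d) : R :=
  complex.Re (\tr (K *m rho *m adjmx K)).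

End Coherence.

(* If Tr rho = 1 and rho = sum_i w_i w_i^* for arbitrary (unnormalised) vectors w_i,
   normalising the w_i gives a pure-state decomposition of cost
   sum_i |w_i|^2 log2 R_C(w_i); every state admits such a family, obtained by peeling
   off rank-one pieces A e_j e_j^* A / A_jj of a positive semidefinite A.  An
   incoherent Kraus operator has at most one nonzero entry in each column, so
   R_C(K psi) <= R_C(psi).  Pushing a decomposition of rho through the K_n therefore
   gives (C2) and (C3), and merging near-optimal decompositions of the rho_i gives
   (C4).  For (C1): a diagonal state is a mixture of basis vectors, while
   |rho_ab| <= sum_i p_i |psi_i(a) psi_i(b)| <= sum_i p_i log2 R_C(psi_i) for a <> b,
   because a vector with two nonzero entries has coherence rank at least 2. *)

From HB Require Import structures.
From mathcomp Require Import all_boot all_order all_algebra.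
From mathcomp Require Import boolp classical_sets reals exp.
From mathcomp Require Import complex.
From mathcomp Require Import ring lra.
Set Implicit Arguments. Unset Strict Implicit. Unset Printing Implicit Defensive.
Import Order.TTheory GRing.Theory Num.Theory.
Local Open Scope ring_scope.
Local Open Scope complex_scope.

Section Matrices.
Variable R : realType.
Local Notation C := R[i].
Implicit Types (m n p : nat) (c : C).

Lemma adjmx_mul m n p (A : 'M[C]_(m, n)) (B : 'M[C]_(n, p)) :
  adjmx (A *m B) = adjmx B *m adjmx A.
Proof. by rewrite /adjmx map_mxM trmx_mul. Qed.

Lemma adjmxD m n (A B : 'M[C]_(m, n)) : adjmx (A + B) = adjmx A + adjmx B.
Proof. by apply/matrixP => i j; rewrite !mxE rmorphD. Qed.

Lemma adjmxB m n (A B : 'M[C]_(m, n)) : adjmx (A - B) = adjmx A - adjmx B.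
Proof. by apply/matrixP => i j; rewrite !mxE rmorphB. Qed.

Lemma adjmxZ m n c (A : 'M[C]_(m, n)) : adjmx (c *: A) = conjc c *: adjmx A.
Proof. by apply/matrixP => i j; rewrite !mxE rmorphM. Qed.

Lemma adjmx0 m n : adjmx (0 : 'M[C]_(m, n)) = 0.
Proof. by apply/matrixP => i j; rewrite !mxE conjc0. Qed.

Lemma adjmxK m n (A : 'M[C]_(m, n)) : adjmx (adjmx A) = A.
Proof. by apply/matrixP => i j; rewrite !mxE conjcK. Qed.

Lemma adjmx1 n : adjmx (1%:M : 'M[C]_n) = 1%:M.
Proof. by apply/matrixP => i j; rewrite !mxE eq_sym conjc_nat. Qed.

Lemma adjmx_delta m n (i : 'I_m) (j : 'I_n) :
  adjmx (delta_mx i j : 'M[C]_(m, n)) = delta_mx j i.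
Proof. by apply/matrixP => a b; rewrite !mxE conjc_nat andbC. Qed.

Lemma mulmx_delta_mxE m n p q (A : 'M[C]_(m, n)) (B : 'M[C]_(p, q)) i j k l :
  (A *m delta_mx i j *m B) k l = A k i * B j l.
Proof.
rewrite -(mul_delta_mx (0 : 'I_1)) mulmxA -colE -mulmxA -rowE.
by rewrite mxE big_ord1 !mxE.
Qed.

End Matrices.

Section Vectors.
Variables (R : realType) (d : nat).
Local Notation C := R[i].
Local Notation cV := 'cV[C]_d.
Implicit Types (w : cV).

Lemma ger0_RRe (z : C) : 0 <= z -> z = (complex.Re z)%:C.
Proof. by move=> /ger0_real /RRe_real. Qed.

Definition sqnorm w : R := complex.Re ((adjmx w *m w) 0 0).

Lemma adjmx_mul_selfE w : (adjmx w *m w) 0 0 = \sum_j `|w j 0| ^+ 2.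
Proof. by rewrite mxE; apply: eq_bigr => j _; rewrite !mxE sqr_normc mulrC. Qed.

Lemma adjmx_mul_self_ge0 w : 0 <= (adjmx w *m w) 0 0.
Proof. by rewrite adjmx_mul_selfE sumr_ge0 // => j _; rewrite exprn_ge0. Qed.

Lemma sqnormE w : (adjmx w *m w) 0 0 = (sqnorm w)%:C.
Proof. exact/ger0_RRe/adjmx_mul_self_ge0. Qed.

Lemma sqnorm_ge0 w : 0 <= sqnorm w.
Proof. by rewrite -lecR -sqnormE adjmx_mul_self_ge0. Qed.

Lemma sqnorm_eq0 w : (sqnorm w == 0) = (w == 0).
Proof.
apply/idP/eqP => [|->]; last by rewrite /sqnorm adjmx0 mul0mx mxE.
rewrite -(inj_eq (@complexI R)) -sqnormE adjmx_mul_selfE psumr_eq0 => [/allP w0|j _].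
  apply/matrixP => j k; rewrite ord1 mxE.
  by have := w0 j (mem_index_enum j); rewrite /= sqrf_eq0 normr_eq0 => /eqP.
exact: exprn_ge0.
Qed.

Lemma sqnorm0 : sqnorm (0 : cV) = 0.
Proof. by apply/eqP; rewrite sqnorm_eq0. Qed.

Lemma entry_sqr_le_sqnorm w j : `|w j 0| ^+ 2 <= (sqnorm w)%:C.
Proof.
by rewrite -sqnormE adjmx_mul_selfE (bigD1 j) //= lerDl sumr_ge0 // => k _; rewrite exprn_ge0.
Qed.

Lemma sqnormZ (s : R) w : sqnorm (s%:C *: w) = s ^+ 2 * sqnorm w.
Proof.
apply: complexI; rewrite -sqnormE adjmxZ conjc_real -scalemxAl -scalemxAr.
by rewrite 2!mxE sqnormE -!rmorphM mulrA -expr2.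
Qed.

Lemma sqnorm_unit w : unit_vec w -> sqnorm w = 1.
Proof. by rewrite /unit_vec sqnormE => /complexI. Qed.

Lemma mxtrace_outer w : \tr (w *m adjmx w) = (sqnorm w)%:C.
Proof. by rewrite mxtrace_mulC /mxtrace big_ord1 sqnormE. Qed.

Lemma outer_scale_real (t : R) w : 0 <= t ->
  t%:C *: (w *m adjmx w) = ((Num.sqrt t)%:C *: w) *m adjmx ((Num.sqrt t)%:C *: w).
Proof.
move=> t0; rewrite adjmxZ conjc_real -scalemxAl -scalemxAr scalerA -rmorphM.
by rewrite -expr2 sqr_sqrtr.
Qed.

Lemma sqnorm_scale_sqrt (t : R) w : 0 <= t ->
  sqnorm ((Num.sqrt t)%:C *: w) = t * sqnorm w.
Proof. by move=> t0; rewrite sqnormZ sqr_sqrtr. Qed.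

Definition normalize w : cV := (Num.sqrt (sqnorm w)^-1)%:C *: w.

Lemma outer_normalize w :
  normalize w *m adjmx (normalize w) = (sqnorm w)^-1%:C *: (w *m adjmx w).
Proof. by rewrite outer_scale_real // invr_ge0 sqnorm_ge0. Qed.

Lemma normalize_unit w : w != 0 -> unit_vec (normalize w).
Proof.
rewrite -sqnorm_eq0 => w0; rewrite /unit_vec sqnormE.
by rewrite sqnorm_scale_sqrt ?invr_ge0 ?sqnorm_ge0 // mulVf.
Qed.

End Vectors.

Section CoherenceRank.
Variables (R : realType) (d : nat).
Local Notation C := R[i].
Local Notation cV := 'cV[C]_d.
Implicit Types (c : C) (v w : cV) (K : 'M[C]_d) (x y : R).

Lemma ln2_gt0 : 0 < ln (2 : R).
Proof. by rewrite ln_gt0 // ltr1n. Qed.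

Lemma log2_ge0 x : 1 <= x -> 0 <= log2 x.
Proof. by move=> x1; apply: divr_ge0; [exact: ln_ge0 | exact/ltW/ln2_gt0]. Qed.

Lemma log2_le0 x : x <= 1 -> log2 x <= 0.
Proof.
by move=> x1; apply: mulr_le0_ge0; [exact: ln_le0 | rewrite invr_ge0 ltW ?ln2_gt0].
Qed.

Lemma log2_ge1 x : 2 <= x -> 1 <= log2 x.
Proof.
move=> x2; rewrite /log2 ler_pdivlMr ?ln2_gt0 // mul1r ler_ln ?posrE //.
exact: lt_le_trans x2.
Qed.

Lemma ler_log2 x y : 0 < x -> x <= y -> log2 x <= log2 y.
Proof.
move=> x0 xy; rewrite /log2 ler_wpM2r ?invr_ge0 ?(ltW ln2_gt0) //.
by rewrite ler_ln ?posrE // (lt_le_trans x0).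
Qed.

Lemma coh_rank_gt0 w : w != 0 -> (0 < coh_rank w)%N.
Proof.
move=> wn0; rewrite card_gt0; apply/set0Pn.
have [j wj] : exists j, w j 0 != 0.
  apply/existsP; apply: contraR wn0 => /existsPn w0.
  by apply/eqP/matrixP => j k; rewrite ord1 mxE; apply/eqP/negPn/w0.
by exists j; rewrite inE.
Qed.

Lemma coh_rank_ge2 w a b : a != b -> w a 0 != 0 -> w b 0 != 0 ->
  (2 <= coh_rank w)%N.
Proof.
move=> ab wa wb; have <- : #|[set a; b]| = 2%N by rewrite cards2 ab.
apply: subset_leq_card.
by apply/fintype.subsetP => k; rewrite !inE => /orP[] /eqP ->.
Qed.

Lemma coh_rank_le w v : (forall j, w j 0 != 0 -> v j 0 != 0) ->
  (coh_rank w <= coh_rank v)%N.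
Proof. by move=> wv; apply/subset_leq_card/fintype.subsetP => j; rewrite !inE; apply: wv. Qed.

Lemma coh_rankZ_le c w : (coh_rank (c *: w) <= coh_rank w)%N.
Proof. by apply: coh_rank_le => j; rewrite mxE mulf_eq0 negb_or => /andP[]. Qed.

Lemma coh_rankZ c w : c != 0 -> coh_rank (c *: w) = coh_rank w.
Proof. by move=> c0; apply: eq_card => j; rewrite !inE mxE mulf_eq0 negb_or c0. Qed.

Lemma coh_rank_normalize w : coh_rank (normalize w) = coh_rank w.
Proof.
have [->|w0] := eqVneq w 0; first by rewrite /normalize scaler0.
rewrite coh_rankZ // -(rmorph0 (real_complex R)) (inj_eq (@complexI R)).
by rewrite sqrtr_eq0 -ltNge invr_gt0 lt_def sqnorm_eq0 w0 sqnorm_ge0.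
Qed.

Lemma unit_vec_neq0 w : unit_vec w -> w != 0.
Proof.
move=> u; apply/eqP => w0; move: u.
by rewrite /unit_vec w0 adjmx0 mul0mx mxE => /eqP; rewrite eq_sym oner_eq0.
Qed.

Lemma log_coh_rank_ge0 w : w != 0 -> 0 <= log_coh_rank w.
Proof. by move=> /coh_rank_gt0 w0; rewrite log2_ge0 // ler1n. Qed.

Lemma log_coh_rank_le0 w : (coh_rank w <= 1)%N -> log_coh_rank w <= 0.
Proof. by move=> w1; rewrite log2_le0 // lern1. Qed.

Lemma log_coh_rank_ge1 w : (2 <= coh_rank w)%N -> 1 <= log_coh_rank w.
Proof. by move=> w2; rewrite log2_ge1 // ler_nat. Qed.

Lemma ler_log_coh_rank w v : w != 0 -> (coh_rank w <= coh_rank v)%N ->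
  log_coh_rank w <= log_coh_rank v.
Proof. by move=> /coh_rank_gt0 w0 wv; rewrite ler_log2 ?ltr0n ?ler_nat. Qed.

Lemma sqnorm_log_coh_rank_le w v : (w != 0 -> (coh_rank w <= coh_rank v)%N) ->
  sqnorm w * log_coh_rank w <= sqnorm w * log_coh_rank v.
Proof.
have [->|w0 wv] := eqVneq w 0; first by rewrite sqnorm0 !mul0r.
by rewrite ler_wpM2l ?sqnorm_ge0 // ler_log_coh_rank // wv.
Qed.

Lemma incoherent_kraus_col K j r r' : incoherent_kraus K -> r != r' ->
  K r j != 0 -> K r' j = 0.
Proof.
move=> HK rr' Krj.
have Ejj : is_diag_mx (delta_mx j j : 'M[C]_d).
  apply/is_diag_mxP => a b ab; rewrite mxE.
  by case: (eqVneq a j) (eqVneq b j) ab => [->|//] [->|//]; rewrite eqxx.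
have /is_diag_mxP/(_ r r' rr')/eqP := HK _ Ejj.
by rewrite mulmx_delta_mxE !mxE mulf_eq0 (negbTE Krj) conjc_eq0 => /eqP.
Qed.

(* By [incoherent_kraus_col], the support of [K w] lies in the image of the
   support of [w] under the column-to-row map [f]. *)
Lemma coh_rank_kraus_le K w : incoherent_kraus K ->
  (coh_rank (K *m w) <= coh_rank w)%N.
Proof.
move=> HK; pose f j := odflt j [pick r | K r j != 0].
apply: leq_trans (leq_imset_card f _); apply/subset_leq_card/fintype.subsetP => r.
rewrite inE mxE => Kw_r.
have [j /andP[Krj wj]] : exists j, (K r j != 0) && (w j 0 != 0).
  apply/existsP; apply: contraR Kw_r => /existsPn Kw0; apply/eqP/big1 => j _.
  by move: (Kw0 j); rewrite negb_and !negbK => /orP[] /eqP ->; rewrite ?mul0r ?mulr0.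
apply/imsetP; exists j; first by rewrite inE.
rewrite /f; case: pickP => [r' Kr'j | /(_ r)]; last by rewrite Krj.
by apply/eqP; apply: contraTT Kr'j => rr'; rewrite (incoherent_kraus_col HK rr' Krj) eqxx.
Qed.

End CoherenceRank.

Section Psd.
Variables (R : realType) (d : nat).
Local Notation C := R[i].
Local Notation cV := 'cV[C]_d.
Local Notation e_ k := (delta_mx k 0 : cV).
Implicit Types (A P : 'M[C]_d) (x y : cV) (c : C).

Definition sesq A x y : C := (adjmx x *m A *m y) 0 0.
Definition psd A := forall x, 0 <= sesq A x x.

Lemma sesq_delta A a b : sesq A (e_ a) (e_ b) = A a b.
Proof. by rewrite /sesq adjmx_delta -rowE -colE !mxE. Qed.

Lemma sesqDZl A c x y z : sesq A (x + c *: y) z = sesq A x z + conjc c * sesq A y z.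
Proof.
rewrite /sesq adjmxD adjmxZ !mulmxDl -!scalemxAl.
by rewrite [((_ + _ : 'M_1) 0 0)]mxE [((_ *: _ : 'M_1) 0 0)]mxE.
Qed.

Lemma sesqDZr A c x y z : sesq A z (x + c *: y) = sesq A z x + c * sesq A z y.
Proof.
rewrite /sesq mulmxDr -scalemxAr.
by rewrite [((_ + _ : 'M_1) 0 0)]mxE [((_ *: _ : 'M_1) 0 0)]mxE.
Qed.

Lemma sesq_pair A a b c :
  sesq A (e_ a + c *: e_ b) (e_ a + c *: e_ b) =
  A a a + c * A a b + conjc c * A b a + conjc c * c * A b b.
Proof. by rewrite sesqDZl !sesqDZr !sesq_delta; ring. Qed.

Lemma psd_diag_ge0 A a : psd A -> 0 <= A a a.
Proof. by move=> psdA; rewrite -sesq_delta. Qed.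

Lemma psd_herm A a b : psd A -> A b a = conjc (A a b).
Proof.
move=> psdA; have := psdA (e_ a + 1 *: e_ b); have := psdA (e_ a + 'i *: e_ b).
rewrite !sesq_pair.
move: (psd_diag_ge0 a psdA) (psd_diag_ge0 b psdA).
case: (A a a) (A b b) (A a b) (A b a) => [p1 q1] [p2 q2] [x1 y1] [x2 y2].
simpc => /andP[/eqP qa _] /andP[/eqP qb _] /andP[/eqP h1 _] /andP[/eqP h2 _].
by apply/eqP; rewrite eq_complex /=; apply/andP; split; apply/eqP; lra.
Qed.

Lemma psd_adjmx A : psd A -> adjmx A = A.
Proof.
move=> psdA; apply/matrixP => a b; rewrite !mxE (psd_herm b a psdA).
by case: (A a b) => x y /=; simpc.
Qed.

Lemma psd_row_eq0 A a b : psd A -> A a a = 0 -> A a b = 0.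
Proof.
move=> psdA Aaa; apply/eqP/negPn/negP => zn0.
have key c : 0 <= A b b + c * conjc (A a b) + conjc c * A a b.
  by have := psdA (e_ b + c *: e_ a); rewrite sesq_pair Aaa (psd_herm a b psdA) mulr0 addr0.
move: zn0 key; case: (A b b) (A a b) => [p q] [x y] zn0 key.
(* For [c = - k * A a b] the real part of the form below is [-1]. *)
pose k := (p + 1) / (2 * (x ^+ 2 + y ^+ 2)).
have n0 : x ^+ 2 + y ^+ 2 != 0.
  apply: contra zn0; rewrite paddr_eq0 ?sqr_ge0 // !sqrf_eq0.
  by case/andP => /eqP -> /eqP ->.
have := key (Complex (- (k * x)) (- (k * y))); simpc => /andP[_].
have -> : p + (- (k * x * x) - k * y * y) + (- (k * x * x) - k * y * y) = -1.
  by rewrite /k; field.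
by rewrite ler0N1.
Qed.

Lemma psd_eq0 A : psd A -> (forall k, A k k = 0) -> A = 0.
Proof. by move=> psdA A0; apply/matrixP => a b; rewrite mxE psd_row_eq0. Qed.

Lemma psd_congr A P : psd A -> psd (adjmx P *m A *m P).
Proof. by move=> psdA x; have := psdA (P *m x); rewrite /sesq adjmx_mul !mulmxA. Qed.

Lemma delta_mulmx_delta A j : delta_mx j j *m A *m delta_mx j j = A j j *: delta_mx j j.
Proof.
have -> : delta_mx j j *m A *m delta_mx j j = delta_mx j j *m A *m delta_mx j j *m 1%:M.
  by rewrite mulmx1.
apply/matrixP => k l; rewrite mulmx_delta_mxE -[delta_mx j j *m A]mul1mx.
rewrite mulmxA mulmx_delta_mxE !mxE [l == j]eq_sym.
by case: (k == j); case: (j == l); rewrite /= ?mul0r ?mulr0 ?mul1r ?mulr1.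
Qed.

Lemma schur_rank_one A j (t : R) : adjmx A = A -> t%:C * A j j = 1 ->
  adjmx (1%:M - t%:C *: (delta_mx j j *m A)) *m A *m (1%:M - t%:C *: (delta_mx j j *m A))
  = A - t%:C *: (A *m delta_mx j j *m A).
Proof.
move=> hermA tA; rewrite adjmxB adjmx1 adjmxZ conjc_real adjmx_mul hermA adjmx_delta.
rewrite !mulmxBl !mulmxBr !mul1mx !mulmx1 -!scalemxAl -!scalemxAr !mulmxA.
have := congr1 (fun M => A *m M *m A) (delta_mulmx_delta A j).
rewrite /= !mulmxA -scalemxAr -scalemxAl => ->.
by rewrite !scalerA -mulrA tA mulr1 subrr subr0.
Qed.

(* [A - A e_j e_j^* A / A_jj] is the congruence of [A] by the projection
   [1 - e_j e_j^* A / A_jj] ([schur_rank_one]), hence still positive. *)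
Lemma psd_peel A j : psd A -> A j j != 0 -> exists v : cV,
  [/\ psd (A - v *m adjmx v), (A - v *m adjmx v) j j = 0 &
      forall k, A k k = 0 -> (A - v *m adjmx v) k k = 0].
Proof.
move=> psdA Ajj_neq0; have Ajj := ger0_RRe (psd_diag_ge0 j psdA).
set r := complex.Re (A j j) in Ajj.
have r_gt0 : 0 < r.
  by rewrite lt_def -lecR -Ajj psd_diag_ge0 // andbT -(inj_eq (@complexI R)) -Ajj.
have rA : r^-1%:C * A j j = 1 by rewrite Ajj -rmorphM mulVf ?gt_eqF.
pose v := (Num.sqrt r^-1)%:C *: (A *m e_ j).
have vv : v *m adjmx v = r^-1%:C *: (A *m delta_mx j j *m A).
  rewrite -outer_scale_real ?invr_ge0 ?ltW // adjmx_mul (psd_adjmx psdA) adjmx_delta.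
  by rewrite mulmxA -(mulmxA A (delta_mx j 0)) mul_delta_mx.
have vvE k : (A - v *m adjmx v) k k = A k k - r^-1%:C * (A k j * A j k).
  have subZE (M N : 'M[C]_d) c : (M - c *: N) k k = M k k - c * N k k by rewrite !mxE.
  by rewrite vv subZE mulmx_delta_mxE.
exists v; split.
- by rewrite vv -(schur_rank_one (psd_adjmx psdA) rA); apply: psd_congr.
- by rewrite vvE mulrA rA mul1r subrr.
- by move=> k Akk; rewrite vvE (psd_row_eq0 j psdA Akk) Akk mul0r mulr0 subr0.
Qed.

Lemma psd_sum_outer A : psd A -> exists s : seq cV, A = \sum_(w <- s) w *m adjmx w.
Proof.
move: {2}#|[set k | A k k != 0]| (leqnn #|[set k | A k k != 0]|) => n.
elim: n A => [|n IHn] A supp_le psdA.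
  exists [::]; rewrite big_nil; apply: psd_eq0 => // k; apply/eqP/negPn/negP => Akk.
  by move: supp_le; rewrite leqn0 cards_eq0 => /eqP/setP/(_ k); rewrite !inE Akk.
have [j Ajj|A_diag0] := pickP (fun k => A k k != 0); last first.
  by exists [::]; rewrite big_nil; apply: psd_eq0 => // k; apply/eqP/negbFE/A_diag0.
have [v [psdA' A'jj A'kk]] := psd_peel psdA Ajj.
have [|s sE] := IHn (A - v *m adjmx v) _ psdA'; last first.
  by exists (v :: s); rewrite big_cons -sE addrC subrK.
rewrite -ltnS; apply: leq_trans supp_le; apply/proper_card/properP; split.
  by apply/fintype.subsetP => k; rewrite !inE; apply: contra => /eqP/A'kk ->.
by exists j; rewrite !inE ?Ajj // A'jj eqxx.
Qed.

Lemma psd_diag_sum_outer A : psd A -> is_diag_mx A ->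
  A = \sum_j ((Num.sqrt (complex.Re (A j j)))%:C *: e_ j) *m
              adjmx ((Num.sqrt (complex.Re (A j j)))%:C *: e_ j).
Proof.
move=> psdA /is_diag_mxP diagA; transitivity (diag_mx (\row_j A j j)).
  apply/matrixP => a b; rewrite !mxE; have [<-|ab] := eqVneq a b; first by rewrite mulr1n.
  by rewrite mulr0n diagA.
rewrite diag_mx_sum_delta; apply: eq_bigr => j _.
rewrite -outer_scale_real; last by rewrite -lecR -ger0_RRe psd_diag_ge0.
by rewrite -ger0_RRe ?psd_diag_ge0 // mxE adjmx_delta mul_delta_mx.
Qed.

End Psd.

Section CoherenceNumber.
Variables (R : realType) (d : nat).
Local Notation C := R[i].
Local Notation cV := 'cV[C]_d.
Local Open Scope classical_set_scope.
Implicit Types (rho : 'M[C]_d) (x y : R).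

Definition decomp_costs rho : set R :=
  [set x | exists m (p : 'I_m -> R) (psi : 'I_m -> cV),
     pure_decomp rho p psi /\ x = \sum_(i < m) p i * log_coh_rank (psi i)].

Lemma decomp_costs_ge0 rho x : decomp_costs rho x -> 0 <= x.
Proof.
case=> m [p] [psi] [[p0 _ u _] ->]; rewrite sumr_ge0 // => i _.
by rewrite mulr_ge0 ?log_coh_rank_ge0 ?unit_vec_neq0.
Qed.

Lemma log_coh_number_le rho x : decomp_costs rho x -> log_coh_number rho <= x.
Proof. by move=> costx; apply: ge_inf costx; exists 0 => y /decomp_costs_ge0. Qed.

Lemma log_coh_number_ge rho y : decomp_costs rho !=set0 ->
  (forall x, decomp_costs rho x -> y <= x) -> y <= log_coh_number rho.
Proof. exact: lb_le_inf. Qed.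

(* Zero vectors are dropped, the others are normalised and weighted by their
   squared norms. *)
Lemma decomp_costs_outer (I : finType) (w : I -> cV) rho :
  rho = \sum_i w i *m adjmx (w i) -> \tr rho = 1 ->
  decomp_costs rho (\sum_i sqnorm (w i) * log_coh_rank (w i)).
Proof.
move=> rhoE tr1; set A := [pred i | w i != 0].
have wA (k : 'I_#|A|) : w (enum_val k) != 0 by move: (enum_valP k); rewrite inE.
have sum_nonzero (V : nmodType) (F : cV -> V) : F 0 = 0 ->
    \sum_i F (w i) = \sum_(k < #|A|) F (w (enum_val k)).
  move=> F0; rewrite -(big_enum_val (fun i => F (w i))) [RHS]big_rmcond // => i.
  by rewrite inE negbK => /eqP ->.
exists #|A|, (fun k => sqnorm (w (enum_val k))), (fun k => normalize (w (enum_val k))).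
split; last first.
  by rewrite (sum_nonzero _ (fun v => sqnorm v * log_coh_rank v)) ?sqnorm0 ?mul0r //;
     apply: eq_bigr => k _; rewrite /log_coh_rank coh_rank_normalize.
split=> [k|||].
- exact: sqnorm_ge0.
- apply: complexI; rewrite rmorph1 -tr1 rhoE !raddf_sum /=.
  under [RHS]eq_bigr => i _ do rewrite mxtrace_outer.
  by rewrite (sum_nonzero _ (fun v => (sqnorm v)%:C)) ?sqnorm0.
- by move=> k; apply: normalize_unit.
rewrite rhoE (sum_nonzero _ (fun v => v *m adjmx v)) ?mul0mx //; apply: eq_bigr => k _.
by rewrite outer_normalize scalerA -rmorphM mulfV ?sqnorm_eq0 // scale1r.
Qed.

Lemma log_coh_number_le_outer (I : finType) (w : I -> cV) rho :
  rho = \sum_i w i *m adjmx (w i) -> \tr rho = 1 ->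
  log_coh_number rho <= \sum_i sqnorm (w i) * log_coh_rank (w i).
Proof. by move=> rhoE tr1; apply/log_coh_number_le/decomp_costs_outer. Qed.

Lemma decomp_costs_state rho : is_state rho -> decomp_costs rho !=set0.
Proof.
case=> psd_rho tr1; have [s rhoE] := psd_sum_outer psd_rho.
rewrite (big_nth 0) big_mkord in rhoE.
by eexists; apply: decomp_costs_outer rhoE tr1.
Qed.

Lemma log_coh_number_ge0 rho : is_state rho -> 0 <= log_coh_number rho.
Proof.
by move=> /decomp_costs_state ne; apply: log_coh_number_ge ne _ => x /decomp_costs_ge0.
Qed.

Lemma sum_sig (V : nmodType) (J : finType) (m : J -> nat)
    (G : {j : J & 'I_(m j)} -> V) :
  \sum_jk G jk = \sum_j \sum_(k < m j) G (Tagged (fun j => 'I_(m j)) k).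
Proof. by rewrite sig_big_dep; apply: eq_bigr => -[]. Qed.

Lemma log_coh_number_mix_le (J : finType) (t : J -> R) (K : J -> 'M[C]_d)
    (m : J -> nat) (p : forall j, 'I_(m j) -> R) (psi : forall j, 'I_(m j) -> cV)
    (rhos : J -> 'M[C]_d) rho :
  (forall j, 0 <= t j) -> (forall j, incoherent_kraus (K j)) ->
  (forall j, pure_decomp (rhos j) (p j) (psi j)) ->
  rho = \sum_j (t j)%:C *: (K j *m rhos j *m adjmx (K j)) -> \tr rho = 1 ->
  log_coh_number rho <=
  \sum_j t j * \sum_k p j k * sqnorm (K j *m psi j k) * log_coh_rank (psi j k).
Proof.
move=> t0 incK decomp -> tr1.
pose w (jk : {j : J & 'I_(m j)}) := (Num.sqrt (t (tag jk) * p _ (tagged jk)))%:C *: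
  (K (tag jk) *m psi _ (tagged jk)).
have mixE : \sum_j (t j)%:C *: (K j *m rhos j *m adjmx (K j)) = \sum_jk w jk *m adjmx (w jk).
  rewrite sum_sig; apply: eq_bigr => j _; have [p0 _ _ ->] := decomp j.
  rewrite mulmx_sumr mulmx_suml scaler_sumr; apply: eq_bigr => k _.
  rewrite -outer_scale_real ?mulr_ge0 // rmorphM -scalerA -scalemxAr -scalemxAl.
  by rewrite adjmx_mul !mulmxA.
apply: le_trans (log_coh_number_le_outer mixE tr1) _.
rewrite sum_sig; apply: ler_sum => j _; rewrite mulr_sumr; apply: ler_sum => k _.
have [p0 _ _ _] := decomp j.
apply: le_trans (sqnorm_log_coh_rank_le (v := psi j k) _) _.
  by move=> _; apply: leq_trans (coh_rankZ_le _ _) (coh_rank_kraus_le _ (incK j)).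
by rewrite sqnorm_scale_sqrt ?mulr_ge0 // !mulrA.
Qed.

End CoherenceNumber.

Section CoherenceMeasure.
Variables (R : realType) (d : nat).
Local Notation C := R[i].
Local Notation cV := 'cV[C]_d.
Implicit Types (rho : 'M[C]_d) (w : cV).

Lemma incoherent_kraus1 : incoherent_kraus (1%:M : 'M[C]_d).
Proof. by move=> delta; rewrite adjmx1 mul1mx mulmx1. Qed.

Lemma sum_kraus_sqnorm N (K : 'I_N -> 'M[C]_d) w :
  \sum_n adjmx (K n) *m K n = 1%:M -> \sum_n sqnorm (K n *m w) = sqnorm w.
Proof.
move=> HK; apply: complexI; rewrite rmorph_sum -sqnormE.
rewrite -[adjmx w]mulmx1 -HK mulmx_sumr mulmx_suml summxE.
by apply: eq_bigr => n _; rewrite /= -sqnormE adjmx_mul !mulmxA.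
Qed.

Lemma sum_kraus_cost N (K : 'I_N -> 'M[C]_d) m (p : 'I_m -> R) (psi : 'I_m -> cV) :
  \sum_n adjmx (K n) *m K n = 1%:M -> (forall i, unit_vec (psi i)) ->
  \sum_n \sum_i p i * sqnorm (K n *m psi i) * log_coh_rank (psi i) =
  \sum_i p i * log_coh_rank (psi i).
Proof.
move=> HK u; rewrite exchange_big; apply: eq_bigr => i _ /=.
by rewrite -mulr_suml -mulr_sumr sum_kraus_sqnorm // sqnorm_unit // mulr1.
Qed.

Lemma mxtrace_apply_kraus N (K : 'I_N -> 'M[C]_d) rho :
  \sum_n adjmx (K n) *m K n = 1%:M -> \tr (apply_kraus K rho) = \tr rho.
Proof.
move=> HK; rewrite /apply_kraus raddf_sum /=.
under eq_bigr => n _ do rewrite mxtrace_mulC mulmxA.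
by rewrite -raddf_sum -mulmx_suml HK mul1mx.
Qed.

Lemma kraus_probE K rho : psd rho -> \tr (K *m rho *m adjmx K) = (kraus_prob K rho)%:C.
Proof.
move=> psd_rho; apply: ger0_RRe; rewrite sumr_ge0 // => i _.
by have := psd_diag_ge0 i (psd_congr (adjmx K) psd_rho); rewrite adjmxK.
Qed.

Lemma unit_vec_entry_le1 w a : unit_vec w -> `|w a 0| <= 1.
Proof.
move=> u; rewrite -(expr_le1 (n := 2)) //; apply: le_trans (entry_sqr_le_sqnorm w a) _.
by rewrite sqnorm_unit // rmorph1.
Qed.

Lemma entry_mul_le_log_coh_rank w a b : unit_vec w -> a != b ->
  `|w a 0 * conjc (w b 0)| <= (log_coh_rank w)%:C.
Proof.
move=> u ab; have lcr_ge0 : 0 <= (log_coh_rank w)%:C.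
  by rewrite ler0c log_coh_rank_ge0 ?unit_vec_neq0.
have [->|wa] := eqVneq (w a 0) 0; first by rewrite mul0r normr0.
have [->|wb] := eqVneq (w b 0) 0; first by rewrite conjc0 mulr0 normr0.
apply: le_trans (_ : 1 <= _); last first.
  by rewrite -(rmorph1 (real_complex R)) lecR log_coh_rank_ge1 // (coh_rank_ge2 ab).
by rewrite normrM normcJ mulr_ile1 ?normr_ge0 ?unit_vec_entry_le1.
Qed.

Lemma decomp_costs_entry_le rho a b x : a != b -> decomp_costs rho x ->
  `|rho a b| <= x%:C.
Proof.
move=> ab [m [p [psi [[p0 _ u ->] ->]]]].
rewrite summxE rmorph_sum; apply: le_trans (ler_norm_sum _ _ _) _.
apply: ler_sum => i _; rewrite mxE [(_ *m _) a b]mxE big_ord1 !mxE normrM.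
by rewrite ger0_norm ?ler0c // rmorphM ler_wpM2l ?ler0c ?entry_mul_le_log_coh_rank.
Qed.

Lemma log_coh_number_eq0 rho : is_state rho ->
  log_coh_number rho = 0 <-> incoherent rho.
Proof.
move=> st; split=> [L0|diag_rho].
  apply/is_diag_mxP => a b ab; apply/eqP; rewrite -normr_le0.
  have : complex.Re `|rho a b| <= log_coh_number rho.
    apply: log_coh_number_ge (decomp_costs_state st) _ => x /(decomp_costs_entry_le ab).
    by rewrite {1}(ger0_RRe (normr_ge0 _)) lecR.
  by rewrite L0 -lecR -ger0_RRe ?normr_ge0.
apply/eqP; rewrite eq_le log_coh_number_ge0 // andbT.
case: st => psd_rho tr1.
apply: le_trans (log_coh_number_le_outer (psd_diag_sum_outer psd_rho diag_rho) tr1) _.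
apply: sumr_le0 => j _; rewrite mulr_ge0_le0 ?sqnorm_ge0 // log_coh_rank_le0 //.
apply: leq_trans (coh_rankZ_le _ _) _; rewrite -[X in (_ <= X)%N](cards1 j).
apply/subset_leq_card/fintype.subsetP => k; rewrite !inE mxE.
by apply: contraR => kj; rewrite (negbTE kj).
Qed.

Lemma log_coh_number_apply_kraus_le N (K : 'I_N -> 'M[C]_d) rho :
  incoherent_op K -> is_state rho ->
  log_coh_number (apply_kraus K rho) <= log_coh_number rho.
Proof.
case=> HK incK st; apply: log_coh_number_ge (decomp_costs_state st) _.
move=> _ [m [p [psi [decomp ->]]]]; have [_ _ u _] := decomp.
rewrite -(sum_kraus_cost p HK u).
apply: le_trans (log_coh_number_mix_le (t := fun=> 1) (rhos := fun=> rho)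
  (fun=> ler01) incK (fun=> decomp) _ _) _.
- by apply: eq_bigr => n _; rewrite rmorph1 scale1r.
- by rewrite mxtrace_apply_kraus //; case: st.
by under eq_bigr do rewrite mul1r.
Qed.

Lemma log_coh_number_selective_le N (K : 'I_N -> 'M[C]_d) rho :
  incoherent_op K -> is_state rho ->
  \sum_(n < N | 0 < kraus_prob (K n) rho) kraus_prob (K n) rho *
     log_coh_number ((kraus_prob (K n) rho)^-1%:C *: (K n *m rho *m adjmx (K n)))
  <= log_coh_number rho.
Proof.
case=> HK incK st; apply: log_coh_number_ge (decomp_costs_state st) _.
move=> _ [m [p [psi [decomp ->]]]]; have [p0 _ u _] := decomp.
rewrite -(sum_kraus_cost p HK u).
apply: le_trans (_ : _ <= \sum_(n < N | 0 < kraus_prob (K n) rho)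
   \sum_i p i * sqnorm (K n *m psi i) * log_coh_rank (psi i)) _; last first.
  rewrite [X in _ <= X](bigID (fun n => 0 < kraus_prob (K n) rho)) /= lerDl.
  apply: sumr_ge0 => n _; apply: sumr_ge0 => i _.
  apply: mulr_ge0; first exact: mulr_ge0 (p0 i) (sqnorm_ge0 _).
  exact/log_coh_rank_ge0/unit_vec_neq0.
apply: ler_sum => n q_gt0; set q := kraus_prob (K n) rho in q_gt0 *.
rewrite -ler_pdivlMl //; apply: le_trans (log_coh_number_mix_le (J := 'I_1)
  (t := fun=> q^-1) (K := fun=> K n) (rhos := fun=> rho) (p := fun=> p)
  (psi := fun=> psi) _ (fun=> incK n) (fun=> decomp) _ _) _.
- by move=> _; rewrite invr_ge0 ltW.
- by rewrite big_ord1.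
- by rewrite mxtraceZ kraus_probE; [rewrite -rmorphM mulVf ?gt_eqF | case: st].
by rewrite big_ord1.
Qed.

Lemma log_coh_number_convex m (p : 'I_m -> R) (rhos : 'I_m -> 'M[C]_d) :
  (forall j, 0 <= p j) -> \sum_j p j = 1 -> (forall j, is_state (rhos j)) ->
  log_coh_number (\sum_j (p j)%:C *: rhos j) <= \sum_j p j * log_coh_number (rhos j).
Proof.
move=> p0 p1 st; apply/ler_addgt0Pr => e e_gt0.
have near_opt j : exists D : {M : nat & ('I_M -> R) * ('I_M -> cV)},
    pure_decomp (rhos j) (projT2 D).1 (projT2 D).2 /\
    \sum_k (projT2 D).1 k * log_coh_rank ((projT2 D).2 k) < log_coh_number (rhos j) + e.
  have lt_e : log_coh_number (rhos j) < log_coh_number (rhos j) + e by rewrite ltrDl.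
  have [_ [M [q [ph [decomp ->]]]] cost_lt] := inf_lt (decomp_costs_state (st j)) lt_e.
  by exists (existT _ M (q, ph)).
have [D HD] := choice near_opt.
apply: le_trans (log_coh_number_mix_le (t := p) (K := fun=> 1%:M)
  (p := fun j => (projT2 (D j)).1) (psi := fun j => (projT2 (D j)).2)
  p0 (fun=> incoherent_kraus1) (fun j => (HD j).1) _ _) _.
- by apply: eq_bigr => j _; rewrite mul1mx adjmx1 mulmx1.
- rewrite raddf_sum /= -(rmorph1 (real_complex R)) -p1 rmorph_sum /=.
  by apply: eq_bigr => j _; rewrite mxtraceZ; case: (st j) => _ ->; rewrite mulr1.
rewrite -[X in _ <= _ + X]mul1r -p1 mulr_suml -big_split /=; apply: ler_sum => j _.
rewrite -mulrDr; apply: (ler_wpM2l (p0 j)); have [[_ _ u _] /ltW cost_le] := HD j.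
apply: le_trans cost_le.
by under eq_bigr => k _ do rewrite mul1mx (sqnorm_unit (u k)) mulr1.
Qed.

End CoherenceMeasure.

Theorem proposition2 (R : realType) (d : nat) :
  (* (C1) nonnegativity and faithfulness *)
  (forall rho : 'M[R[i]]_d, is_state rho ->
     0 <= log_coh_number rho /\
     (log_coh_number rho = 0 <-> incoherent rho)) /\
  (* (C2) monotonicity under incoherent operations *)
  (forall (N : nat) (K : 'I_N -> 'M[R[i]]_d) (rho : 'M[R[i]]_d),
     incoherent_op K -> is_state rho ->
     log_coh_number (apply_kraus K rho) <= log_coh_number rho) /\
  (* (C3) strong monotonicity under selective incoherent operations *)
  (forall (N : nat) (K : 'I_N -> 'M[R[i]]_d) (rho : 'M[R[i]]_d),
     incoherent_op K -> is_state rho ->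
     (\sum_(n < N | 0 < kraus_prob (K n) rho)
        kraus_prob (K n) rho *
        log_coh_number ((kraus_prob (K n) rho)^-1%:C *: (K n *m rho *m adjmx (K n))))
     <= log_coh_number rho) /\
  (* (C4) convexity *)
  (forall (m : nat) (p : 'I_m -> R) (rhos : 'I_m -> 'M[R[i]]_d),
     (forall j, 0 <= p j) -> \sum_(j < m) p j = 1 ->
     (forall j, is_state (rhos j)) ->
     log_coh_number (\sum_(j < m) (p j)%:C *: rhos j)
       <= \sum_(j < m) p j * log_coh_number (rhos j)).
Proof.
split; first by move=> rho st; split; [exact: log_coh_number_ge0 | exact: log_coh_number_eq0].
split; first exact: log_coh_number_apply_kraus_le.
split; first exact: log_coh_number_selective_le.
exact: log_coh_number_convex.
Qed.
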